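(* Let $n\ge 3$ and let $K_n$ be the complete graph on $n$ vertices. Then the distance eigenvalues of $K_n\otimes K_n$ are $(n-1)(n+3)$, $n-3$, $-3$ with multiplicities $1$, $2n-2$, $(n-1)^2$ respectively.
   Context: The Kronecker product $G\otimes H$ of simple graphs $G,H$ has vertex set $V(G)\times V(H)$, with $(x,y)$ adjacent to $(u,v)$ if and only if $xu\in E(G)$ and $yv\in E(H)$. Distance eigenvalues are the eigenvalues of the distance matrix, whose $(u,v)$ entry is the length of a shortest $u$–$v$ path. *)

From HB Require Import structures.
From mathcomp Require Import all_boot all_order all_algebra.
Set Implicit Arguments. Unset Strict Implicit. Unset Printing Implicit Defensive.
Import Order.TTheory GRing.Theory Num.Theory.

Definition complete_graph (n : nat) : rel 'I_n := fun x y => x != y.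
Arguments complete_graph n : clear implicits.

Definition kron_graph (T U : finType) (eG : rel T) (eH : rel U) : rel (T * U) :=
  fun p q => eG p.1 q.1 && eH p.2 q.2.

Fixpoint walkb (T : finType) (e : rel T) (k : nat) (x y : T) : bool :=
  match k with
  | 0 => x == y
  | k'.+1 => [exists z, e x z && walkb e k' z y]
  end.

(* A shortest walk is a path, hence has length
   < #|T| when it exists; if x, y are in different components the value is
   #|T| (a convention irrelevant for connected graphs). *)
Definition gdist (T : finType) (e : rel T) (x y : T) : nat :=
  find (fun k => walkb e k x y) (iota 0 #|T|).

Definition dist_matrix (R : nzRingType) (T : finType) (e : rel T) : 'M[R]_#|T| :=
  \matrix_(i, j) ((gdist e (enum_val i) (enum_val j))%:R)%R.

From HB Require Import structures.
From mathcomp Require Import all_boot all_order all_algebra.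
From mathcomp Require Import ring zify.
Set Implicit Arguments.
Unset Strict Implicit.
Unset Printing Implicit Defensive.
Import Order.TTheory GRing.Theory Num.Theory.
Local Open Scope ring_scope.

(* Since n >= 3, any two vertices of K_n (x) K_n have a common neighbour, so
   the distance is 0, 1 or 2 according as the vertices agree in both, no, or
   exactly one coordinate.  Writing d1, d2 for the coordinate-agreement
   indicators, the distance matrix is the kernel 1 + d1 + d2 - 3 d1 d2, i.e.
   J(x)J + I(x)J + J(x)I - 3 I(x)I with J the all-ones matrix.  The tensor
   square of an eigenbasis of J (eigenvalues n once, 0 n-1 times) therefore
   diagonalizes it, with eigenvalues a b + a + b - 3 for a, b in {n, 0}. *)

Lemma sumr_delta (R : nzRingType) (T : finType) (F : T -> R) (y : T) :
  \sum_t (t == y)%:R * F t = F y.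
Proof.
by rewrite (bigD1 y) //= eqxx mul1r big1 ?addr0 // => t /negPf ->; rewrite mul0r.
Qed.

Lemma sumr_indicator (R : nzRingType) (T : finType) (y : T) :
  \sum_t (t == y)%:R = 1 :> R.
Proof.
by rewrite -[RHS](sumr_delta (fun=> 1) y); apply: eq_bigr => t _; rewrite mulr1.
Qed.

Lemma big_pair (R : Type) (idx : R) (op : Monoid.com_law idx) (I J : finType)
    (F : I * J -> R) :
  \big[op/idx]_p F p = \big[op/idx]_i \big[op/idx]_j F (i, j).
Proof. by rewrite pair_bigA; apply: eq_bigr => -[]. Qed.

Lemma sum_mul_pair (R : nzSemiRingType) (I J : finType)
    (F : I -> R) (G : J -> R) :
  \sum_(t : I * J) F t.1 * G t.2 = (\sum_i F i) * (\sum_j G j).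
Proof. by rewrite big_distrlr pair_bigA. Qed.

Lemma char_poly_conj (R : comNzRingType) n (A P P' : 'M[R]_n) :
  P' *m P = 1%:M -> char_poly (P' *m A *m P) = char_poly A.
Proof.
move=> P'P; have mapC := map_mxM (@polyC R); rewrite /char_poly.
have -> : char_poly_mx (P' *m A *m P)
    = map_mx polyC P' *m char_poly_mx A *m map_mx polyC P.
  rewrite /char_poly_mx mulmxBr mulmxBl !mapC; congr (_ - _).
  by rewrite mul_mx_scalar -scalemxAl -mapC P'P map_mx1 scalemx1.
rewrite !det_mulmx mulrC mulrA -det_mulmx -mapC.
by rewrite mulmx1C // map_mx1 det1 mul1r.
Qed.

Lemma char_poly_eigenbasis (R : comNzRingType) n (A P P' : 'M[R]_n)
    (d : 'rV[R]_n) :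
  P' *m P = 1%:M -> A *m P = P *m diag_mx d ->
  char_poly A = \prod_i ('X - (d 0 i)%:P).
Proof.
move=> P'P AP; rewrite -(char_poly_conj A P'P) -mulmxA AP mulmxA P'P mul1mx.
rewrite char_poly_trig ?diag_mx_is_trig //.
by apply: eq_bigr => i _; rewrite mxE eqxx mulr1n.
Qed.

Section KernelMatrix.
Variables (R : nzRingType) (T : finType).

Definition kernel_mx (f : T -> T -> R) : 'M[R]_#|T| :=
  \matrix_(i, j) f (enum_val i) (enum_val j).

Lemma mul_kernel_mx (f g : T -> T -> R) :
  kernel_mx f *m kernel_mx g = kernel_mx (fun x y => \sum_t f x t * g t y).
Proof.
apply/matrixP => i j; rewrite !mxE.
rewrite (big_enum_val (fun t => f (enum_val i) t * g t (enum_val j))) /=.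
by apply: eq_bigr => k _; rewrite !mxE.
Qed.

Lemma kernel_mx_eq1 : kernel_mx (fun x y => (x == y)%:R) = 1%:M.
Proof. by apply/matrixP => i j; rewrite !mxE (inj_eq enum_val_inj). Qed.

Lemma kernel_mx_diag (d : T -> R) :
  kernel_mx (fun x y => (x == y)%:R * d y) = diag_mx (\row_i d (enum_val i)).
Proof.
apply/matrixP => i j; rewrite !mxE (inj_eq enum_val_inj).
by case: eqP => [->|_]; rewrite ?mul1r ?mul0r.
Qed.

End KernelMatrix.

Lemma char_poly_kernel_eigenbasis (R : comNzRingType) (T : finType)
    (k p p' : T -> T -> R) (lambda : T -> R) :
  (forall x y, \sum_t p' x t * p t y = (x == y)%:R) ->
  (forall x y, \sum_t k x t * p t y = p x y * lambda y) ->
  char_poly (kernel_mx k) = \prod_t ('X - (lambda t)%:P).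
Proof.
move=> p'p kp; rewrite (big_enum_val (fun t => 'X - (lambda t)%:P)) /=.
rewrite (char_poly_eigenbasis (P := kernel_mx p) (P' := kernel_mx p')
  (d := \row_i lambda (enum_val i))).
- by apply: eq_bigr => i _; rewrite mxE.
- by rewrite -kernel_mx_eq1 mul_kernel_mx; apply/matrixP => i j; rewrite !mxE p'p.
rewrite -kernel_mx_diag !mul_kernel_mx; apply/matrixP => i j; rewrite !mxE kp.
by under eq_bigr => t _ do rewrite mulrCA; rewrite sumr_delta.
Qed.

Section GraphDistance.
Variables (T : finType) (e : rel T).

Lemma gdistP x y k : (k < #|T|)%N -> walkb e k x y ->
  (forall j, (j < k)%N -> ~~ walkb e j x y) -> gdist e x y = k.
Proof.
move=> ltkT walk_k no_shorter; rewrite /gdist -(subnKC (ltnW ltkT)) iotaD.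
rewrite find_cat size_iota add0n -(subnSK ltkT) /= walk_k addn0.
suff -> : has (fun j => walkb e j x y) (iota 0 k) = false by [].
by apply/hasPn => j; rewrite mem_iota => /andP[_]; apply: no_shorter.
Qed.

Lemma gdist_refl x : gdist e x x = 0%N.
Proof. by apply: gdistP => //=; apply/card_gt0P; exists x. Qed.

Lemma gdist_edge x y : (1 < #|T|)%N -> x != y -> e x y -> gdist e x y = 1%N.
Proof.
move=> T_gt1 neq_xy exy; apply: gdistP => //= [|[|//]].
  by apply/existsP; exists y; rewrite exy eqxx.
by rewrite neq_xy.
Qed.

Lemma gdist_common_neighbour x y z : (2 < #|T|)%N -> x != y -> ~~ e x y ->
  e x z -> e z y -> gdist e x y = 2%N.
Proof.
move=> T_gt2 neq_xy nexy exz ezy; apply: gdistP => //=.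
  apply/existsP; exists z; rewrite exz /=.
  by apply/existsP; exists y; rewrite ezy eqxx.
case=> [|[|//]] _ /=; first by rewrite neq_xy.
by apply/existsP => -[w /andP[exw /eqP wy]]; rewrite -wy exw in nexy.
Qed.

End GraphDistance.

Lemma exists_neq2 n (u v : 'I_n) :
  (2 < n)%N -> exists a : 'I_n, (a != u) && (a != v).
Proof.
move=> n_gt2; have : (0 < #|~: [set u; v]|)%N.
  by have := cardsC [set u; v]; rewrite card_ord cards2; case: (u != v) => /=; lia.
by case/card_gt0P => a; rewrite !inE negb_or; exists a.
Qed.

Lemma gdist_kron_complete m n (x y : 'I_m * 'I_n) : (2 < m)%N -> (2 < n)%N ->
  gdist (kron_graph (complete_graph m) (complete_graph n)) x y
  = if x == y then 0%N else if (x.1 != y.1) && (x.2 != y.2) then 1%N else 2%N.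
Proof.
move=> m_gt2 n_gt2; have card_gt2 : (2 < #|{: 'I_m * 'I_n}|)%N.
  by rewrite card_prod !card_ord; nia.
have [->|neq_xy] := eqVneq x y; first exact: gdist_refl.
case: ifP => adj_xy; first by apply: gdist_edge; rewrite // ltnW.
have [a /andP[a1x a1y]] := exists_neq2 x.1 y.1 m_gt2.
have [b /andP[b2x b2y]] := exists_neq2 x.2 y.2 n_gt2.
apply: (gdist_common_neighbour (z := (a, b))) => //.
- by rewrite /kron_graph /complete_graph adj_xy.
- by rewrite /kron_graph /complete_graph /= eq_sym a1x eq_sym b2x.
by rewrite /kron_graph /complete_graph /= a1y b2y.
Qed.

Section AllOnesEigenbasis.
Context {R : numFieldType}.
Variable n : nat.
Local Notation I := 'I_n.+1.

(* Columns: the all-ones vector, then e_j - e_0 for j <> 0. *)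
Definition ones_basis (i j : I) : R :=
  if j == ord0 then 1 else (i == j)%:R - (i == ord0)%:R.
Definition ones_basis_inv (i j : I) : R :=
  if i == ord0 then n.+1%:R^-1 else (i == j)%:R - n.+1%:R^-1.
Definition ones_eigen (j : I) : R := if j == ord0 then n.+1%:R else 0.

Lemma prod_ones_eigen (S : comNzRingType) (F : R -> S) :
  \prod_(j < n.+1) F (ones_eigen j) = F n.+1%:R * F 0 ^+ n.
Proof.
by rewrite big_ord_recl (eq_bigr (fun=> F 0)) ?prodr_const ?card_ord.
Qed.

Lemma sum_ones_basis (x j : I) :
  \sum_k ones_basis k j = ones_basis x j * ones_eigen j.
Proof.
rewrite /ones_basis /ones_eigen; case: (j == ord0).
  by rewrite sumr_const card_ord mul1r.
by rewrite sumrB !sumr_indicator subrr mulr0.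
Qed.

Lemma ones_basis_invK (i j : I) :
  \sum_k ones_basis_inv i k * ones_basis k j = (i == j)%:R.
Proof.
have N_neq0 : n.+1%:R != 0 :> R by rewrite pnatr_eq0.
rewrite /ones_basis_inv; case: eqP => [->|/eqP i_neq0].
  rewrite -mulr_sumr (sum_ones_basis ord0) /ones_basis /ones_eigen.
  case: eqP => [<-|/eqP j_neq0]; first by rewrite eqxx mul1r mulVf.
  by rewrite !mulr0 eq_sym (negPf j_neq0).
under eq_bigr => k _ do rewrite mulrBl [i == k]eq_sym.
rewrite sumrB sumr_delta -mulr_sumr (sum_ones_basis i) /ones_basis /ones_eigen.
case: eqP => [->|_]; first by rewrite mul1r mulVf // subrr (negPf i_neq0).
by rewrite !mulr0 subr0 (negPf i_neq0) subr0.
Qed.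

End AllOnesEigenbasis.

Section AgreementKernel.
Variables (R : numFieldType) (m n : nat) (c0 c1 c2 c12 : R).
Local Notation T := ('I_m.+1 * 'I_n.+1)%type.

Definition prod_basis (x y : T) : R := ones_basis x.1 y.1 * ones_basis x.2 y.2.
Definition prod_basis_inv (x y : T) : R :=
  ones_basis_inv x.1 y.1 * ones_basis_inv x.2 y.2.

(* The generic matrix c0 J(x)J + c1 I(x)J + c2 J(x)I + c12 I(x)I. *)
Definition agreement_kernel (x y : T) : R :=
  c0 + c1 * (x.1 == y.1)%:R + c2 * (x.2 == y.2)%:R
  + c12 * ((x.1 == y.1)%:R * (x.2 == y.2)%:R).

Definition agreement_eigen (y : T) : R :=
  c0 * (ones_eigen y.1 * ones_eigen y.2) + c1 * ones_eigen y.2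
  + c2 * ones_eigen y.1 + c12.

Lemma prod_basis_invK x y :
  \sum_t prod_basis_inv x t * prod_basis t y = (x == y)%:R.
Proof.
pose f1 a : R := ones_basis_inv x.1 a * ones_basis a y.1.
pose f2 b : R := ones_basis_inv x.2 b * ones_basis b y.2.
transitivity (\sum_t f1 t.1 * f2 t.2).
  by apply: eq_bigr => t _; rewrite mulrACA.
by rewrite sum_mul_pair !ones_basis_invK -natrM mulnb.
Qed.

Lemma agreement_kernel_eigen x y :
  \sum_t agreement_kernel x t * prod_basis t y = prod_basis x y * agreement_eigen y.
Proof.
pose q1 a : R := ones_basis a y.1; pose q2 b : R := ones_basis b y.2.
pose d1 a := (a == x.1)%:R * q1 a; pose d2 b := (b == x.2)%:R * q2 b.
transitivity (\sum_t (c0 * (q1 t.1 * q2 t.2) + c1 * (d1 t.1 * q2 t.2)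
    + c2 * (q1 t.1 * d2 t.2) + c12 * (d1 t.1 * d2 t.2))).
  apply: eq_bigr => t _.
  rewrite /agreement_kernel /prod_basis /d1 /d2 /q1 /q2.
  by rewrite [x.1 == _]eq_sym [x.2 == _]eq_sym; ring.
rewrite !big_split /= -!mulr_sumr (sum_mul_pair q1 q2) (sum_mul_pair d1 q2).
rewrite (sum_mul_pair q1 d2) (sum_mul_pair d1 d2) !sumr_delta.
rewrite (sum_ones_basis x.1 y.1) (sum_ones_basis x.2 y.2).
by rewrite /prod_basis /agreement_eigen /q1 /q2; ring.
Qed.

Lemma char_poly_agreement_kernel :
  char_poly (kernel_mx agreement_kernel) = \prod_t ('X - (agreement_eigen t)%:P).
Proof.
exact: char_poly_kernel_eigenbasis prod_basis_invK agreement_kernel_eigen.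
Qed.

End AgreementKernel.

Lemma prod_ones_eigen2 (R : numFieldType) (S : comNzRingType) m n
    (F : R -> R -> S) :
  \prod_(t : 'I_m.+1 * 'I_n.+1) F (ones_eigen t.1) (ones_eigen t.2)
  = F m.+1%:R n.+1%:R * F m.+1%:R 0 ^+ n * F 0 n.+1%:R ^+ m * F 0 0 ^+ (m * n).
Proof.
rewrite big_pair.
under eq_bigr => a _ do rewrite (prod_ones_eigen n (F (ones_eigen a))).
rewrite (prod_ones_eigen m (fun u => F u n.+1%:R * F u 0 ^+ n)) exprMn -exprM.
by rewrite mulnC !mulrA.
Qed.

Lemma dist_matrix_kron_complete (R : numFieldType) m n : (1 < m)%N -> (1 < n)%N ->
  dist_matrix R (kron_graph (complete_graph m.+1) (complete_graph n.+1))
  = kernel_mx (agreement_kernel 1 1 1 (-3)).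
Proof.
move=> m_gt1 n_gt1; apply/matrixP => i j; rewrite !mxE gdist_kron_complete //.
case: (enum_val i) (enum_val j) => [x1 x2] [y1 y2].
rewrite /agreement_kernel xpair_eqE /=.
by case: (x1 == y1); case: (x2 == y2); rewrite /=; ring.
Qed.

Theorem corollary4p5 (R : realFieldType) (n : nat) (hn : (3 <= n)%N) :
  char_poly (dist_matrix R (kron_graph (complete_graph n) (complete_graph n)))
  = ('X - (((n - 1) * (n + 3))%N)%:R%:P)
    * ('X - (n%:R - 3)%:P) ^+ (2 * n - 2)
    * ('X - (-3)%:P) ^+ ((n - 1) ^ 2).
Proof.
case: n hn => [//|m] hn.
rewrite dist_matrix_kron_complete // char_poly_agreement_kernel /agreement_eigen.
rewrite (prod_ones_eigen2 _ _ (fun u v => 'X - (1 * (u * v) + 1 * v + 1 * u + -3)%:P)).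
have -> : (2 * m.+1 - 2 = m + m)%N by lia.
rewrite exprD subSS subn0 !mulrA.
by congr (_ * _ ^+ _ * _ ^+ _ * _ ^+ _); congr ('X - _%:P); ring.
Qed.
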